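(* Given $t\ge0$, define \[ \varphi(u)=2\sqrt{\frac{u+1}{3}}\cos\Big[\tfrac13\arccos\Big(-t\Big(\frac{u+1}{3}\Big)^{-3/2}\Big)\Big] \] for $u\ge 3t^{2/3}-1$. Then: (i) $\varphi(u)$ and $\varphi^2(u)$ are strictly increasing on $[3t^{2/3}-1,\infty)$; (ii) if $0\le t\le1$, then $\varphi(2t)=1$; (iii) if $0\le t<1$, then $\varphi^2(u)$ is Lipschitz continuous on $[2t,\infty)$. *)

From Stdlib Require Import Reals Lra.
Open Scope R_scope.

(* t^(2/3) for t >= 0, with the convention 0^(2/3) = 0
   (Stdlib's Rpower is only meaningful for a positive base). *)
Definition pow23 (t : R) : R :=
  if Rle_dec t 0 then 0 else Rpower t (2/3).

Definition phi (t u : R) : R :=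
  2 * sqrt ((u + 1) / 3) *
  cos (/3 * acos (- t * Rpower ((u + 1) / 3) (- (3/2)))).

(* With [s = sqrt ((u+1)/3)] and [c = cos (acos a / 3)], where [a = - t / s^3],
   the triple-angle formula [4 c^3 - 3 c = a] says exactly that [x = phi t u = 2 s c]
   is a root of the depressed cubic [x^3 - (u+1) x + 2 t]; since [acos a <= PI],
   [c >= 1/2], so [phi t u >= s] is its largest root.  Every claim is then pure algebra
   on this cubic: comparing the cubics at [u < v] gives monotonicity, [x = 1] is the
   root at [u = 2t], and subtracting the two cubic equations yields
   [(x^2 - y^2) (x y (x + y) - 2 t) = (u - v) x y (x + y)], which for [x, y >= 1]
   gives the Lipschitz constant [1 / (1 - t)]. *)
From Stdlib Require Import Reals Lra Psatz.
Open Scope R_scope.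

Lemma cos_3a (a : R) : cos (3 * a) = 4 * cos a ^ 3 - 3 * cos a.
Proof.
  replace (3 * a) with (2 * a + a) by ring.
  rewrite cos_plus, cos_2a_cos, sin_2a.
  pose proof (sin2_cos2 a) as Hpyth; unfold Rsqr in Hpyth.
  replace (2 * sin a * cos a * sin a) with (2 * cos a * (sin a * sin a)) by ring.
  replace (sin a * sin a) with (1 - cos a * cos a) by lra.
  ring.
Qed.

Lemma cos_third_acos (a : R) : -1 <= a <= 1 ->
  let c := cos (/3 * acos a) in 4 * c ^ 3 - 3 * c = a /\ 1/2 <= c.
Proof.
  intros Ha c.
  pose proof (acos_bound a) as Hbound.
  split.
  - unfold c; rewrite <- cos_3a.
    replace (3 * (/3 * acos a)) with (acos a) by field.
    apply cos_acos; lra.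
  - unfold c; rewrite <- cos_PI3.
    apply cos_decr_1; pose proof PI_RGT_0; lra.
Qed.

Lemma Rpower_opp_three_halves (w : R) : 0 < w ->
  Rpower w (- (3/2)) = / sqrt w ^ 3.
Proof.
  intro Hw; rewrite Rpower_Ropp.
  replace (3/2) with (/2 * INR 3) by (simpl; field).
  rewrite <- Rpower_mult, Rpower_pow by (unfold Rpower; apply exp_pos).
  now rewrite Rpower_sqrt.
Qed.

Section Cubic.

Variables t u : R.
Hypothesis t_ge0 : 0 <= t.
Hypothesis u_ge : -1 <= u.
Hypothesis t_le : t <= sqrt ((u + 1) / 3) ^ 3.

Let w := (u + 1) / 3.
Let s := sqrt w.
Let a := - t * Rpower w (- (3/2)).

Lemma acos_arg_spec : s ^ 3 * a = - t /\ -1 <= a <= 0.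
Proof.
  destruct (Req_dec t 0) as [-> | Ht].
  { unfold a; split; [ring | lra]. }
  assert (Hs : 0 < s).
  { destruct (Rle_lt_or_eq_dec 0 s (sqrt_pos w)) as [Hs | Hs]; [exact Hs |].
    fold w s in t_le; rewrite <- Hs in t_le; simpl in t_le; lra. }
  assert (Hw : 0 < w) by (apply sqrt_lt_0_alt; rewrite sqrt_0; exact Hs).
  assert (Hs3 : 0 < s ^ 3) by (apply pow_lt; exact Hs).
  unfold a; rewrite Rpower_opp_three_halves by exact Hw; fold s.
  fold w s in t_le.
  split; [field; lra |].
  assert (Hinv : 0 < / s ^ 3) by (apply Rinv_0_lt_compat; exact Hs3).
  split; [| nra].
  apply Rmult_le_reg_r with (s ^ 3); [exact Hs3 |].
  replace (- t * / s ^ 3 * s ^ 3) with (- t) by (field; lra).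
  lra.
Qed.

Lemma phi_ge_sqrt : sqrt ((u + 1) / 3) <= phi t u.
Proof.
  destruct acos_arg_spec as [_ Ha].
  destruct (cos_third_acos a ltac:(lra)) as [_ Hc].
  assert (Hs : 0 <= s) by apply sqrt_pos.
  unfold phi; fold w s a; nra.
Qed.

Lemma phi_cubic : phi t u ^ 3 - (u + 1) * phi t u + 2 * t = 0.
Proof.
  destruct acos_arg_spec as [Hsa Ha].
  destruct (cos_third_acos a ltac:(lra)) as [Hc _].
  assert (Hss : s * s = w) by (apply sqrt_sqrt; unfold w; lra).
  unfold phi; fold w s a.
  set (c := cos (/3 * acos a)) in *.
  replace (u + 1) with (3 * (s * s)) by (rewrite Hss; unfold w; field).
  replace ((2 * s * c) ^ 3 - 3 * (s * s) * (2 * s * c) + 2 * t)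
    with (2 * (s ^ 3 * (4 * c ^ 3 - 3 * c)) + 2 * t) by ring.
  rewrite Hc, Hsa; ring.
Qed.

End Cubic.

Lemma phi_domain_mono (t u v : R) : -1 <= u -> u <= v ->
  t <= sqrt ((u + 1) / 3) ^ 3 -> t <= sqrt ((v + 1) / 3) ^ 3.
Proof.
  intros Hu Huv Hdom; apply (Rle_trans _ _ _ Hdom), pow_incr.
  split; [apply sqrt_pos | apply sqrt_le_1_alt; lra].
Qed.

(* On [x >= s] the cubic [x^3 - 3 s^2 x] is nondecreasing, and raising [u]
   lowers the cubic at every positive point, so its largest root moves right. *)
Lemma phi_increasing (t u v : R) : 0 <= t -> -1 <= u -> u < v ->
  t <= sqrt ((u + 1) / 3) ^ 3 -> phi t u < phi t v.
Proof.
  intros Ht Hu Huv Hdom.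
  assert (Hv : -1 <= v) by lra.
  pose proof (phi_domain_mono t u v Hu (Rlt_le _ _ Huv) Hdom) as Hdomv.
  pose proof (phi_ge_sqrt t v Ht Hdomv) as Hys.
  pose proof (phi_cubic t u Ht Hu Hdom) as Hx.
  pose proof (phi_cubic t v Ht Hv Hdomv) as Hy.
  assert (Hss : sqrt ((v + 1) / 3) * sqrt ((v + 1) / 3) = (v + 1) / 3)
    by (apply sqrt_sqrt; lra).
  assert (Hs : 0 < sqrt ((v + 1) / 3)) by (apply sqrt_lt_R0; lra).
  set (x := phi t u) in *; set (y := phi t v) in *; set (s := sqrt ((v + 1) / 3)) in *.
  destruct (Rlt_le_dec x y) as [Hlt | Hle]; [exact Hlt | exfalso].
  assert (Hneg : x ^ 3 - (v + 1) * x + 2 * t < 0).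
  { replace (x ^ 3 - (v + 1) * x + 2 * t) with ((u - v) * x) by lra; nra. }
  assert (Hfactor : (x ^ 3 - (v + 1) * x + 2 * t) - (y ^ 3 - (v + 1) * y + 2 * t)
                    = (x - y) * (x * x + x * y + y * y - 3 * (s * s)))
    by (rewrite Hss; field).
  assert (0 <= (x - y) * (x * x + x * y + y * y - 3 * (s * s)))
    by (apply Rmult_le_pos; nra).
  lra.
Qed.

Lemma le_sqrt_cube (t w : R) : 0 <= w -> t ^ 2 <= w ^ 3 -> t <= sqrt w ^ 3.
Proof.
  intros Hw Htw.
  pose proof (sqrt_pos w) as Hs0.
  pose proof (sqrt_sqrt w Hw) as Hss.
  assert (Hs3 : 0 <= sqrt w ^ 3) by (apply pow_le; exact Hs0).
  assert (Hsq : (sqrt w ^ 3) ^ 2 = w ^ 3).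
  { replace ((sqrt w ^ 3) ^ 2) with ((sqrt w * sqrt w) ^ 3) by ring.
    now rewrite Hss. }
  nra.
Qed.

Lemma phi_domain_pow23 (t u : R) : 0 <= t -> 3 * pow23 t - 1 <= u ->
  -1 <= u /\ t <= sqrt ((u + 1) / 3) ^ 3.
Proof.
  intros Ht Hu; unfold pow23 in Hu.
  destruct (Rle_dec t 0) as [Ht0 | Ht0].
  { replace t with 0 by lra; split; [lra | apply pow_le, sqrt_pos]. }
  set (r := Rpower t (2/3)) in *.
  assert (Hr : 0 < r) by (unfold r, Rpower; apply exp_pos).
  assert (Hr3 : r ^ 3 = t ^ 2).
  { unfold r; rewrite <- (Rpower_pow 3) by (unfold Rpower; apply exp_pos).
    rewrite Rpower_mult, <- Rpower_pow by lra.
    f_equal; simpl; field. }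
  split; [lra |].
  apply le_sqrt_cube; [lra |].
  rewrite <- Hr3; apply pow_incr; lra.
Qed.

(* [t^2 <= ((2t+1)/3)^3] because the difference is [(t-1)^2 (8t+1) / 27]. *)
Lemma phi_domain_2t (t u : R) : 0 <= t -> 2 * t <= u ->
  -1 <= u /\ t <= sqrt ((u + 1) / 3) ^ 3.
Proof.
  intros Ht Hu; split; [lra |].
  apply le_sqrt_cube; [lra |].
  assert (((2 * t + 1) / 3) ^ 3 <= ((u + 1) / 3) ^ 3) by (apply pow_incr; lra).
  assert (0 <= (t - 1) ^ 2 * (8 * t + 1)) by (apply Rmult_le_pos; [apply pow2_ge_0 | lra]).
  replace (((2 * t + 1) / 3) ^ 3) with (t ^ 2 + (t - 1) ^ 2 * (8 * t + 1) / 27) in * by field.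
  lra.
Qed.

(* At [u = 2t] the cubic is [(x - 1) (x^2 + x - 2t)], and [phi >= s] rules out
   the root of the second factor. *)
Lemma phi_at_2t (t : R) : 0 <= t -> t <= 1 -> phi t (2 * t) = 1.
Proof.
  intros Ht Ht1.
  destruct (phi_domain_2t t (2 * t) Ht (Rle_refl _)) as [Hu Hdom].
  pose proof (phi_ge_sqrt t (2 * t) Ht Hdom) as Hxs.
  pose proof (phi_cubic t (2 * t) Ht Hu Hdom) as Hx.
  pose proof (sqrt_sqrt ((2 * t + 1) / 3) ltac:(lra)) as Hss.
  pose proof (sqrt_pos ((2 * t + 1) / 3)).
  set (s := sqrt ((2 * t + 1) / 3)) in *; set (x := phi t (2 * t)) in *.
  assert (Hs1 : s <= 1) by nra.
  assert (Hfactor : x ^ 3 - (2 * t + 1) * x + 2 * t = (x - 1) * (x * x + x + 1 - 3 * (s * s)))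
    by (rewrite Hss; field).
  destruct (Req_dec x 1) as [Heq | Hne]; [exact Heq | exfalso].
  destruct (Rlt_le_dec x 1).
  - assert (0 < x * x + x + 1 - 3 * (s * s)) by nra; nra.
  - assert (0 < x * x + x + 1 - 3 * (s * s)) by nra.
    assert (0 < x - 1) by lra; nra.
Qed.

Lemma phi_ge1 (t u : R) : 0 <= t -> t <= 1 -> 2 * t <= u -> 1 <= phi t u.
Proof.
  intros Ht Ht1 Hu; rewrite <- (phi_at_2t t Ht Ht1).
  destruct (Req_dec u (2 * t)) as [-> | Hne]; [lra |].
  destruct (phi_domain_2t t (2 * t) Ht (Rle_refl _)) as [H2t Hdom].
  apply Rlt_le, phi_increasing; auto; lra.
Qed.

Lemma cubic_roots_sq_lipschitz (t u v x y : R) : 0 <= t < 1 -> 1 <= x -> 1 <= y ->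
  x ^ 3 - (u + 1) * x + 2 * t = 0 -> y ^ 3 - (v + 1) * y + 2 * t = 0 ->
  Rabs (x ^ 2 - y ^ 2) <= / (1 - t) * Rabs (u - v).
Proof.
  intros Ht Hx1 Hy1 Hx Hy.
  set (P := x * y * (x + y)).
  assert (HP : 2 <= P) by (unfold P; nra).
  assert (Hid : (x ^ 2 - y ^ 2) * (P - 2 * t) = (u - v) * P).
  { assert (E : (x ^ 2 - y ^ 2) * (P - 2 * t) - (u - v) * P
         = y * (x + y) * (x ^ 3 - (u + 1) * x + 2 * t)
           - x * (x + y) * (y ^ 3 - (v + 1) * y + 2 * t)) by (unfold P; ring).
    rewrite Hx, Hy in E; lra. }
  assert (Hidabs : Rabs (x ^ 2 - y ^ 2) * (P - 2 * t) = Rabs (u - v) * P).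
  { rewrite <- (Rabs_pos_eq (P - 2 * t)) by nra.
    rewrite <- (Rabs_pos_eq P) at 2 by lra.
    rewrite <- !Rabs_mult; f_equal; exact Hid. }
  pose proof (Rabs_pos (x ^ 2 - y ^ 2)).
  (* [P - 2t >= (1 - t) P] because [P >= 2]. *)
  assert (Hbound : Rabs (x ^ 2 - y ^ 2) * (1 - t) <= Rabs (u - v)).
  { apply Rmult_le_reg_r with P; [lra |].
    assert (0 <= Rabs (x ^ 2 - y ^ 2) * (t * (P - 2)))
      by (apply Rmult_le_pos; [lra | apply Rmult_le_pos; lra]).
    rewrite <- Hidabs; nra. }
  apply Rmult_le_reg_r with (1 - t); [lra |].
  replace (/ (1 - t) * Rabs (u - v) * (1 - t)) with (Rabs (u - v)) by (field; lra).
  exact Hbound.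
Qed.

Theorem lemma7 (t : R) (ht : 0 <= t) :
  (* (i) phi and phi^2 strictly increasing on [3 t^(2/3) - 1, oo) *)
  (forall u v, 3 * pow23 t - 1 <= u -> u < v -> phi t u < phi t v) /\
  (forall u v, 3 * pow23 t - 1 <= u -> u < v -> (phi t u)^2 < (phi t v)^2) /\
  (* (ii) *)
  (t <= 1 -> phi t (2 * t) = 1) /\
  (* (iii) phi^2 Lipschitz on [2t, oo) *)
  (t < 1 -> exists L : R, forall u v, 2 * t <= u -> 2 * t <= v ->
      Rabs ((phi t u)^2 - (phi t v)^2) <= L * Rabs (u - v)).
Proof.
  split; [| split; [| split]].
  - intros u v Hu Huv; destruct (phi_domain_pow23 t u ht Hu) as [Hu1 Hdom].
    now apply phi_increasing.
  - intros u v Hu Huv; destruct (phi_domain_pow23 t u ht Hu) as [Hu1 Hdom].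
    pose proof (phi_increasing t u v ht Hu1 Huv Hdom).
    pose proof (sqrt_pos ((u + 1) / 3)).
    pose proof (phi_ge_sqrt t u ht Hdom).
    nra.
  - now apply phi_at_2t.
  - intros Ht1; exists (/ (1 - t)); intros u v Hu Hv.
    destruct (phi_domain_2t t u ht Hu) as [Hu1 Hdomu].
    destruct (phi_domain_2t t v ht Hv) as [Hv1 Hdomv].
    apply cubic_roots_sq_lipschitz; try lra.
    + apply phi_ge1; lra.
    + apply phi_ge1; lra.
    + now apply phi_cubic.
    + now apply phi_cubic.
Qed.
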